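(* Let $\mathcal{C}$ be a finitely complete 2-category. Every $\mathcal{F}_{\mathrm{bof}}$-quotient map in $\mathcal{C}$ is an effective $\mathcal{F}_{\mathrm{bof}}$-quotient map.
   Context: All 2-categories are strict and all limits and colimits are strict $\mathbf{Cat}$-enriched (weighted) ones; finitely complete means having all finite weighted limits. Let $\mathcal{K}_{\mathrm{bof}}$ be the 2-category generated by objects $1,2$, morphisms $u,v\colon2\to1$ and 2-cells $\alpha,\beta\colon u\Rightarrow v$. The $\mathcal{F}_{\mathrm{bof}}$-kernel of $f\colon A\to B$ is the 2-functor $\mathcal{K}_{\mathrm{bof}}\to\mathcal{C}$ sending $1\mapsto A$ and $u,v,\alpha,\beta$ to the universal data $u,v\colon\mathrm{Eq}(f)\to A$, $\alpha,\beta\colon u\Rightarrow v$ with $f\alpha=f\beta$ (a finite weighted limit). The $\mathcal{F}_{\mathrm{bof}}$-quotient of $X\colon\mathcal{K}_{\mathrm{bof}}\to\mathcal{C}$ is, when it exists, the coequifier $e\colon X1\to Q$ of $X\alpha,X\beta$, universal in the 2-categorical sense among morphisms $e$ with $e\cdot X\alpha=e\cdot X\beta$. A morphism is an $\mathcal{F}_{\mathrm{bof}}$-quotient map if it is isomorphic in the arrow 2-category $\mathcal{C}^{\mathbf 2}$ to the $\mathcal{F}_{\mathrm{bof}}$-quotient of some $X$; it is effective if its $\mathcal{F}_{\mathrm{bof}}$-kernel has an $\mathcal{F}_{\mathrm{bof}}$-quotient and the canonical comparison from that quotient to $f$ is invertible. *)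

Definition tr {H : Type} (Cl : H -> H -> Type) {f f' g g' : H}
  (e1 : f = f') (e2 : g = g') (a : Cl f g) : Cl f' g' :=
  match e1 in _ = x return Cl x g' with
  | eq_refl => match e2 in _ = y return Cl f y with eq_refl => a end
  end.

(** * Strict 2-categories
    1-cells compose diagrammatically: [comp f g] is "g after f".
    2-cells compose vertically ([vcomp]) and are whiskered on the left
    ([lwh k a] = k·a : k;f => k;g) and on the right ([rwh a h] = a·h : f;h => g;h).
    A sesquicategory satisfying the interchange law is exactly a strict 2-category. *)
Record TwoCat := {
  ob : Type;
  hom : ob -> ob -> Type;
  cell : forall (A B : ob), hom A B -> hom A B -> Type;
  idm : forall A, hom A A;
  comp : forall A B C, hom A B -> hom B C -> hom A C;
  comp_assoc : forall A B C D (f : hom A B) (g : hom B C) (h : hom C D),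
      comp A C D (comp A B C f g) h = comp A B D f (comp B C D g h);
  comp_id_l : forall A B (f : hom A B), comp A A B (idm A) f = f;
  comp_id_r : forall A B (f : hom A B), comp A B B f (idm B) = f;
  id2 : forall A B (f : hom A B), cell A B f f;
  vcomp : forall A B (f g h : hom A B), cell A B f g -> cell A B g h -> cell A B f h;
  vcomp_assoc : forall A B (f g h k : hom A B) (a : cell A B f g) (b : cell A B g h)
      (c : cell A B h k),
      vcomp A B f h k (vcomp A B f g h a b) c = vcomp A B f g k a (vcomp A B g h k b c);
  vcomp_id_l : forall A B (f g : hom A B) (a : cell A B f g), vcomp A B f f g (id2 A B f) a = a;
  vcomp_id_r : forall A B (f g : hom A B) (a : cell A B f g), vcomp A B f g g a (id2 A B g) = a;
  lwh : forall X A B (k : hom X A) (f g : hom A B),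
      cell A B f g -> cell X B (comp X A B k f) (comp X A B k g);
  rwh : forall A B Y (f g : hom A B),
      cell A B f g -> forall h : hom B Y, cell A Y (comp A B Y f h) (comp A B Y g h);
  lwh_id2 : forall X A B (k : hom X A) (f : hom A B),
      lwh X A B k f f (id2 A B f) = id2 X B (comp X A B k f);
  lwh_vcomp : forall X A B (k : hom X A) (f g h : hom A B) (a : cell A B f g) (b : cell A B g h),
      lwh X A B k f h (vcomp A B f g h a b)
      = vcomp X B _ _ _ (lwh X A B k f g a) (lwh X A B k g h b);
  rwh_id2 : forall A B Y (f : hom A B) (h : hom B Y),
      rwh A B Y f f (id2 A B f) h = id2 A Y (comp A B Y f h);
  rwh_vcomp : forall A B Y (f g k : hom A B) (a : cell A B f g) (b : cell A B g k) (h : hom B Y),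
      rwh A B Y f k (vcomp A B f g k a b) h
      = vcomp A Y _ _ _ (rwh A B Y f g a h) (rwh A B Y g k b h);
  lwh_idm : forall A B (f g : hom A B) (a : cell A B f g),
      tr (cell A B) (comp_id_l A B f) (comp_id_l A B g) (lwh A A B (idm A) f g a) = a;
  rwh_idm : forall A B (f g : hom A B) (a : cell A B f g),
      tr (cell A B) (comp_id_r A B f) (comp_id_r A B g) (rwh A B B f g a (idm B)) = a;
  lwh_lwh : forall W X A B (k' : hom W X) (k : hom X A) (f g : hom A B) (a : cell A B f g),
      tr (cell W B) (comp_assoc W X A B k' k f) (comp_assoc W X A B k' k g)
         (lwh W A B (comp W X A k' k) f g a)
      = lwh W X B k' _ _ (lwh X A B k f g a);
  rwh_rwh : forall A B Y Z (f g : hom A B) (a : cell A B f g) (h : hom B Y) (h' : hom Y Z),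
      tr (cell A Z) (comp_assoc A B Y Z f h h') (comp_assoc A B Y Z g h h')
         (rwh A Y Z _ _ (rwh A B Y f g a h) h')
      = rwh A B Z f g a (comp B Y Z h h');
  lwh_rwh : forall X A B Y (k : hom X A) (f g : hom A B) (a : cell A B f g) (h : hom B Y),
      tr (cell X Y) (comp_assoc X A B Y k f h) (comp_assoc X A B Y k g h)
         (rwh X B Y _ _ (lwh X A B k f g a) h)
      = lwh X A Y k _ _ (rwh A B Y f g a h);
  interchange : forall A B C (f g : hom A B) (h k : hom B C) (a : cell A B f g) (b : cell B C h k),
      vcomp A C _ _ _ (rwh A B C f g a h) (lwh A B C g h k b)
      = vcomp A C _ _ _ (lwh A B C f h k b) (rwh A B C f g a k)
}.

Arguments hom {_} _ _.
Arguments cell {_ _ _} _ _.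
Arguments idm {_} _.
Arguments comp {_ _ _ _} _ _.
Arguments comp_assoc {_ _ _ _ _} _ _ _.
Arguments id2 {_ _ _} _.
Arguments vcomp {_ _ _ _ _ _} _ _.
Arguments lwh {_ _ _ _} _ {_ _} _.
Arguments rwh {_ _ _ _ _ _} _ _.

Section Limits.
Variable C : TwoCat.

Lemma eq_pre_assoc {X E A B : ob C} (m : hom X E) (e : hom E A) (f g : hom A B)
  (H : comp e f = comp e g) : comp (comp m e) f = comp (comp m e) g.
Proof. rewrite !comp_assoc, H; reflexivity. Qed.

Lemma eq_whisk_to {X I A B : ob C} (m : hom X I) (i : hom I A) (a : hom X A)
  (H : comp m i = a) (f : hom A B) : comp m (comp i f) = comp a f.
Proof. rewrite <- comp_assoc, H; reflexivity. Qed.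

Definition lwhA {X I A B : ob C} (m : hom X I) (i : hom I A) (f g : hom A B)
  (l : cell (comp i f) (comp i g)) : cell (comp (comp m i) f) (comp (comp m i) g) :=
  tr cell (eq_sym (comp_assoc m i f)) (eq_sym (comp_assoc m i g)) (lwh m l).

Definition is_iso {A B : ob C} (h : hom A B) : Prop :=
  exists h' : hom B A, comp h h' = idm A /\ comp h' h = idm B.

(** ** The finite weighted limits used to define finite completeness.
    Each is stated with its 1-dimensional and 2-dimensional universal property
    (i.e. strict Cat-enriched universality). *)

Definition is_terminal (T : ob C) : Prop :=
  (forall X : ob C, exists! t : hom X T, True) /\
  (forall (X : ob C) (t t' : hom X T), exists! th : cell t t', True).

Definition is_product {A B P : ob C} (p1 : hom P A) (p2 : hom P B) : Prop :=
  (forall (X : ob C) (a : hom X A) (b : hom X B),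
      exists! m : hom X P, comp m p1 = a /\ comp m p2 = b) /\
  (forall (X : ob C) (m m' : hom X P) (r : cell (comp m p1) (comp m' p1))
      (s : cell (comp m p2) (comp m' p2)),
      exists! th : cell m m', rwh th p1 = r /\ rwh th p2 = s).

Definition is_equalizer {E A B : ob C} (f g : hom A B) (e : hom E A)
  (H : comp e f = comp e g) : Prop :=
  (forall (X : ob C) (a : hom X A), comp a f = comp a g ->
      exists! m : hom X E, comp m e = a) /\
  (forall (X : ob C) (m m' : hom X E) (r : cell (comp m e) (comp m' e)),
      tr cell (eq_pre_assoc m e f g H) (eq_pre_assoc m' e f g H) (rwh r f) = rwh r g ->
      exists! th : cell m m', rwh th e = r).

Definition is_inserter {I A B : ob C} (f g : hom A B) (i : hom I A)
  (l : cell (comp i f) (comp i g)) : Prop :=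
  (forall (X : ob C) (a : hom X A) (s : cell (comp a f) (comp a g)),
      exists! m : hom X I, exists H : comp m i = a,
        tr cell (eq_whisk_to m i a H f) (eq_whisk_to m i a H g) (lwh m l) = s) /\
  (forall (X : ob C) (m m' : hom X I) (r : cell (comp m i) (comp m' i)),
      vcomp (lwhA m i f g l) (rwh r g) = vcomp (rwh r f) (lwhA m' i f g l) ->
      exists! th : cell m m', rwh th i = r).

Definition is_equifier {E A B : ob C} {f g : hom A B} (a b : cell f g) (e : hom E A) : Prop :=
  lwh e a = lwh e b /\
  (forall (X : ob C) (x : hom X A), lwh x a = lwh x b ->
      exists! m : hom X E, comp m e = x) /\
  (forall (X : ob C) (m m' : hom X E) (r : cell (comp m e) (comp m' e)),
      exists! th : cell m m', rwh th e = r).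

(** These are finite weighted limits and
    they generate all finite weighted limits (Street; Kelly, "Elementary
    observations on 2-categorical limits"), so this is the standard notion of a
    finitely complete 2-category. *)
Definition finitely_complete : Prop :=
  (exists T : ob C, is_terminal T) /\
  (forall A B : ob C, exists (P : ob C) (p1 : hom P A) (p2 : hom P B), is_product p1 p2) /\
  (forall (A B : ob C) (f g : hom A B), exists (E : ob C) (e : hom E A)
      (H : comp e f = comp e g), is_equalizer f g e H) /\
  (forall (A B : ob C) (f g : hom A B), exists (I : ob C) (i : hom I A)
      (l : cell (comp i f) (comp i g)), is_inserter f g i l) /\
  (forall (A B : ob C) (f g : hom A B) (a b : cell f g), exists (E : ob C) (e : hom E A),
      is_equifier a b e).

(** ** F_bof-kernels and F_bof-quotients.
    A 2-functor K_bof -> C is the same as data (X1, X2, u, v : X2 -> X1, a, b : u => v),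
    since K_bof is free on its generators. *)

Definition is_bof_kernel {A B E : ob C} (f : hom A B) (u v : hom E A) (a b : cell u v) : Prop :=
  rwh a f = rwh b f /\
  (forall (X : ob C) (x y : hom X A) (s t : cell x y), rwh s f = rwh t f ->
      exists! m : hom X E, exists (H1 : comp m u = x) (H2 : comp m v = y),
        tr cell H1 H2 (lwh m a) = s /\ tr cell H1 H2 (lwh m b) = t) /\
  (forall (X : ob C) (m m' : hom X E) (r : cell (comp m u) (comp m' u))
      (p : cell (comp m v) (comp m' v)),
      vcomp (lwh m a) p = vcomp r (lwh m' a) ->
      vcomp (lwh m b) p = vcomp r (lwh m' b) ->
      exists! th : cell m m', rwh th u = r /\ rwh th v = p).

Definition is_bof_quotient {X1 X2 Q : ob C} {u v : hom X2 X1} (a b : cell u v)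
  (e : hom X1 Q) : Prop :=
  rwh a e = rwh b e /\
  (forall (Y : ob C) (g : hom X1 Y), rwh a g = rwh b g ->
      exists! m : hom Q Y, comp e m = g) /\
  (forall (Y : ob C) (m m' : hom Q Y) (r : cell (comp e m) (comp e m')),
      exists! th : cell m m', lwh e th = r).

(** Isomorphism in the arrow 2-category C^2 (objects: 1-cells; 1-cells: strictly
    commuting squares): a commuting square whose two sides are invertible. *)
Definition arrow_iso {X1 Q A B : ob C} (e : hom X1 Q) (f : hom A B) : Prop :=
  exists (h : hom X1 A) (k : hom Q B), is_iso h /\ is_iso k /\ comp e k = comp h f.

Definition bof_quotient_map {A B : ob C} (f : hom A B) : Prop :=
  exists (X1 X2 Q : ob C) (u v : hom X2 X1) (a b : cell u v) (e : hom X1 Q),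
    is_bof_quotient a b e /\ arrow_iso e f.

Definition effective_bof {A B : ob C} (f : hom A B) : Prop :=
  (exists (E : ob C) (u v : hom E A) (a b : cell u v), is_bof_kernel f u v a b) /\
  (forall (E : ob C) (u v : hom E A) (a b : cell u v), is_bof_kernel f u v a b ->
     exists (Q : ob C) (q : hom A Q), is_bof_quotient a b q /\
       exists c : hom Q B, comp q c = f /\ is_iso c).

Definition effective_bof_quotient_map {A B : ob C} (f : hom A B) : Prop :=
  bof_quotient_map f /\ effective_bof f.

End Limits.

Arguments finitely_complete : clear implicits.

(** The F_bof-kernel of [f : A -> B] is built from finite limits in three
    steps: a product and an inserter give the arrow object of [A] (the
    cotensor of [A] with the arrow category), a second inserter over it gives
    the object classifying pairs of parallel 2-cells into [A], and the equifier
    of the two generic cells whiskered by [f] is the kernel.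

    For effectiveness, let [f] be isomorphic in the arrow 2-category to a
    coequifier [e] of [a, b]; then [f] is itself a coequifier of [a h, b h].
    Any [g] coequifying the kernel of [f] coequifies every pair of 2-cells
    that [f] coequifies, because such a pair factors through the kernel; and
    the two-dimensional part of being a coequifier of a pair does not mention
    the pair.  Hence [f] is the coequifier of its own kernel and the
    comparison map is the identity. *)

From Stdlib Require Import ProofIrrelevance.

Definition heq {C : TwoCat} {A B : ob C} {f g f' g' : hom A B}
  (a : cell f g) (b : cell f' g') : Prop :=
  exists (e1 : f = f') (e2 : g = g'), tr cell e1 e2 a = b.

Infix "=~=" := heq (at level 70, no associativity).

Section HeterogeneousEquality.
Context {C : TwoCat}.

Lemma heq_refl {A B : ob C} {f g : hom A B} (a : cell f g) : a =~= a.
Proof. exists eq_refl, eq_refl; reflexivity. Qed.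

Lemma heq_sym {A B : ob C} {f g f' g' : hom A B} {a : cell f g} {b : cell f' g'} :
  a =~= b -> b =~= a.
Proof. intros [e1 [e2 H]]; destruct e1, e2, H; apply heq_refl. Qed.

Lemma heq_trans {A B : ob C} {f g f1 g1 f2 g2 : hom A B}
  {a : cell f g} {b : cell f1 g1} {c : cell f2 g2} : a =~= b -> b =~= c -> a =~= c.
Proof. intros [e1 [e2 H]] [e3 [e4 H']]; destruct e1, e2, e3, e4, H, H'; apply heq_refl. Qed.

Lemma tr_heq {A B : ob C} {f g f' g' : hom A B} (e1 : f = f') (e2 : g = g') (a : cell f g) :
  a =~= tr cell e1 e2 a.
Proof. exists e1, e2; reflexivity. Qed.

Lemma tr_eq_heq {A B : ob C} {f g f' g' : hom A B} {e1 : f = f'} {e2 : g = g'}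
  {a : cell f g} {b : cell f' g'} : tr cell e1 e2 a = b -> a =~= b.
Proof. intro H; exists e1, e2; exact H. Qed.

(* Uniqueness of identity proofs makes the transport irrelevant. *)
Lemma heq_tr {A B : ob C} {f g f' g' : hom A B} (e1 : f = f') (e2 : g = g')
  {a : cell f g} {b : cell f' g'} : a =~= b -> tr cell e1 e2 a = b.
Proof.
  intros [e1' [e2' H]].
  rewrite (proof_irrelevance _ e1 e1'), (proof_irrelevance _ e2 e2'); exact H.
Qed.

Lemma heq_eq {A B : ob C} {f g : hom A B} {a b : cell f g} : a =~= b -> a = b.
Proof. exact (heq_tr eq_refl eq_refl). Qed.

Lemma heq_src {A B : ob C} {f g f' g' : hom A B} {a : cell f g} {b : cell f' g'} :
  a =~= b -> f = f'.
Proof. intros [e1 _]; exact e1. Qed.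

Lemma heq_tgt {A B : ob C} {f g f' g' : hom A B} {a : cell f g} {b : cell f' g'} :
  a =~= b -> g = g'.
Proof. intros [_ [e2 _]]; exact e2. Qed.

Lemma heq_tr2 {A B : ob C} {f g f' g' : hom A B} {a b : cell f g} {s t : cell f' g'} :
  a =~= s -> b =~= t ->
  exists (e1 : f = f') (e2 : g = g'), tr cell e1 e2 a = s /\ tr cell e1 e2 b = t.
Proof. intros [e1 [e2 Ha]] Hb; exists e1, e2; split; [exact Ha | exact (heq_tr e1 e2 Hb)]. Qed.

Lemma heq_lwh {X A B : ob C} {k : hom X A} {f g f' g' : hom A B}
  {a : cell f g} {b : cell f' g'} : a =~= b -> lwh k a =~= lwh k b.
Proof. intros [e1 [e2 H]]; destruct e1, e2, H; apply heq_refl. Qed.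

Lemma heq_rwh {A B Y : ob C} {f g f' g' : hom A B} {h : hom B Y}
  {a : cell f g} {b : cell f' g'} : a =~= b -> rwh a h =~= rwh b h.
Proof. intros [e1 [e2 H]]; destruct e1, e2, H; apply heq_refl. Qed.

Lemma heq_vcomp {A B : ob C} {f g h f' g' h' : hom A B} {a : cell f g} {b : cell g h}
  {a' : cell f' g'} {b' : cell g' h'} : a =~= a' -> b =~= b' -> vcomp a b =~= vcomp a' b'.
Proof.
  intros [e1 [e2 Ha]] [e3 [e4 Hb]]; destruct e1, e2, e4, Ha.
  rewrite (proof_irrelevance _ e3 eq_refl) in Hb; destruct Hb; apply heq_refl.
Qed.

Lemma heq_vcomp_square {A B : ob C} {f g h k f' g' h' k' : hom A B}
  {a : cell f g} {p : cell g k} {r : cell f h} {b : cell h k}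
  {a' : cell f' g'} {p' : cell g' k'} {r' : cell f' h'} {b' : cell h' k'} :
  a =~= a' -> p =~= p' -> r =~= r' -> b =~= b' ->
  vcomp a p = vcomp r b -> vcomp a' p' = vcomp r' b'.
Proof.
  intros Ha Hp Hr Hb H; apply heq_eq.
  eapply heq_trans; [exact (heq_sym (heq_vcomp Ha Hp)) |].
  rewrite H; exact (heq_vcomp Hr Hb).
Qed.

Lemma heq_lwh_eq {X A B : ob C} {k k' : hom X A} {f g : hom A B} (a : cell f g) :
  k = k' -> lwh k a =~= lwh k' a.
Proof. intros []; apply heq_refl. Qed.

Lemma heq_rwh_eq {A B Y : ob C} {f g : hom A B} (a : cell f g) {h h' : hom B Y} :
  h = h' -> rwh a h =~= rwh a h'.
Proof. intros []; apply heq_refl. Qed.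

Lemma heq_lwh_lwh {W X A B : ob C} (k' : hom W X) (k : hom X A) {f g : hom A B}
  (a : cell f g) : lwh (comp k' k) a =~= lwh k' (lwh k a).
Proof. exact (tr_eq_heq (lwh_lwh _ _ _ _ _ _ _ _ _ a)). Qed.

Lemma heq_rwh_rwh {A B Y Z : ob C} {f g : hom A B} (a : cell f g) (h : hom B Y)
  (h' : hom Y Z) : rwh (rwh a h) h' =~= rwh a (comp h h').
Proof. exact (tr_eq_heq (rwh_rwh _ _ _ _ _ _ _ a h h')). Qed.

Lemma heq_lwh_rwh {X A B Y : ob C} (k : hom X A) {f g : hom A B} (a : cell f g)
  (h : hom B Y) : rwh (lwh k a) h =~= lwh k (rwh a h).
Proof. exact (tr_eq_heq (lwh_rwh _ _ _ _ _ k _ _ a h)). Qed.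

Lemma heq_lwh_idm {A B : ob C} {f g : hom A B} (a : cell f g) : lwh (idm A) a =~= a.
Proof. exact (tr_eq_heq (lwh_idm _ _ _ _ _ a)). Qed.

Lemma heq_lwhA {X I A B : ob C} (m : hom X I) (i : hom I A) {f g : hom A B}
  (l : cell (comp i f) (comp i g)) : lwhA C m i f g l =~= lwh m l.
Proof. exact (heq_sym (tr_heq _ _ _)). Qed.

Lemma heq_lwh_cancel {X A B : ob C} {h : hom X A} {h' : hom A X} :
  comp h' h = idm A -> forall {f g f' g' : hom A B} (a : cell f g) (b : cell f' g'),
  lwh h a =~= lwh h b -> a =~= b.
Proof.
  intros Hh f g f' g' a b Hab.
  assert (Hret : forall (f g : hom A B) (c : cell f g), c =~= lwh h' (lwh h c)).
  { intros f0 g0 c.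
    eapply heq_trans; [exact (heq_sym (heq_lwh_idm c)) |].
    eapply heq_trans; [exact (heq_lwh_eq c (eq_sym Hh)) | apply heq_lwh_lwh]. }
  eapply heq_trans; [apply Hret |].
  eapply heq_trans; [exact (heq_lwh Hab) | exact (heq_sym (Hret _ _ b))].
Qed.

End HeterogeneousEquality.

Section Kernels.
Context {C : TwoCat}.

Definition is_arrow_object {I A : ob C} (u v : hom I A) (l : cell u v) : Prop :=
  (forall (X : ob C) (x y : hom X A) (s : cell x y), exists! m : hom X I, lwh m l =~= s) /\
  (forall (X : ob C) (m m' : hom X I) (r : cell (comp m u) (comp m' u))
      (p : cell (comp m v) (comp m' v)),
      vcomp (lwh m l) p = vcomp r (lwh m' l) ->
      exists! th : cell m m', rwh th u = r /\ rwh th v = p).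

(* The cotensor of [A] with the category with two parallel arrows [0 => 1]. *)
Definition is_parallel_arrows_object {I A : ob C} (u v : hom I A) (a b : cell u v) : Prop :=
  (forall (X : ob C) (x y : hom X A) (s t : cell x y),
      exists! m : hom X I, lwh m a =~= s /\ lwh m b =~= t) /\
  (forall (X : ob C) (m m' : hom X I) (r : cell (comp m u) (comp m' u))
      (p : cell (comp m v) (comp m' v)),
      vcomp (lwh m a) p = vcomp r (lwh m' a) ->
      vcomp (lwh m b) p = vcomp r (lwh m' b) ->
      exists! th : cell m m', rwh th u = r /\ rwh th v = p).

Lemma ex_unique_rwh_comp {X J O A : ob C} {m m' : hom X J} (j : hom J O) (u v : hom O A)
  (r : cell (comp m (comp j u)) (comp m' (comp j u)))
  (p : cell (comp m (comp j v)) (comp m' (comp j v)))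
  (r' : cell (comp (comp m j) u) (comp (comp m' j) u))
  (p' : cell (comp (comp m j) v) (comp (comp m' j) v)) :
  r' =~= r -> p' =~= p ->
  (exists! th1 : cell (comp m j) (comp m' j), rwh th1 u = r' /\ rwh th1 v = p') ->
  (forall th1, rwh th1 u = r' -> rwh th1 v = p' -> exists! th : cell m m', rwh th j = th1) ->
  exists! th : cell m m', rwh th (comp j u) = r /\ rwh th (comp j v) = p.
Proof.
  intros Hr Hp [th1 [[Hr1 Hp1] Hth1_uniq]] Hlift.
  destruct (Hlift th1 Hr1 Hp1) as [th [Hth Hth_uniq]].
  exists th; split.
  - split; apply heq_eq; (eapply heq_trans; [exact (heq_sym (heq_rwh_rwh th j _)) |]);
      rewrite Hth; [rewrite Hr1 | rewrite Hp1]; assumption.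
  - intros th' [Hr' Hp']; apply Hth_uniq; symmetry; apply Hth1_uniq.
    split; apply heq_eq; (eapply heq_trans; [apply heq_rwh_rwh |]);
      [rewrite Hr'; exact (heq_sym Hr) | rewrite Hp'; exact (heq_sym Hp)].
Qed.

Lemma arrow_object_of_inserter {A P I : ob C} {p1 p2 : hom P A} {i : hom I P}
  {l : cell (comp i p1) (comp i p2)} :
  is_product C p1 p2 -> is_inserter C p1 p2 i l ->
  is_arrow_object (comp i p1) (comp i p2) l.
Proof.
  intros [HP1 HP2] [HI1 HI2]; split.
  - intros X x y s.
    destruct (HP1 X x y) as [n [[Hn1 Hn2] Hn_uniq]].
    destruct (HI1 X n (tr cell (eq_sym Hn1) (eq_sym Hn2) s)) as [m [[Hmn Hm] Hm_uniq]].
    exists m; split.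
    + exact (heq_trans (tr_eq_heq Hm) (heq_sym (tr_heq _ _ s))).
    + intros q Hq.
      assert (Hqn : n = comp q i).
      { apply Hn_uniq; rewrite !comp_assoc; exact (conj (heq_src Hq) (heq_tgt Hq)). }
      apply Hm_uniq; exists (eq_sym Hqn); apply heq_tr.
      exact (heq_trans Hq (tr_heq _ _ s)).
  - intros X m m' r p Hrp.
    pose (r' := tr cell (eq_sym (comp_assoc m i p1)) (eq_sym (comp_assoc m' i p1)) r).
    pose (p' := tr cell (eq_sym (comp_assoc m i p2)) (eq_sym (comp_assoc m' i p2)) p).
    apply (ex_unique_rwh_comp i p1 p2 r p r' p'
             (heq_sym (tr_heq _ _ r)) (heq_sym (tr_heq _ _ p)) (HP2 X _ _ r' p')).
    intros th1 Hr1 Hp1; apply HI2.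
    refine (heq_vcomp_square (heq_sym (heq_lwhA m i l)) _ _ (heq_sym (heq_lwhA m' i l)) Hrp).
    + rewrite Hp1; apply tr_heq.
    + rewrite Hr1; apply tr_heq.
Qed.

Lemma parallel_arrows_object_of_inserter {O A J : ob C} {u v : hom O A} {a : cell u v}
  {j : hom J O} {b : cell (comp j u) (comp j v)} :
  is_arrow_object u v a -> is_inserter C u v j b ->
  is_parallel_arrows_object (comp j u) (comp j v) (lwh j a) b.
Proof.
  intros [HO1 HO2] [HJ1 HJ2]; split.
  - intros X x y s t.
    destruct (HO1 X x y s) as [n [Hns Hn_uniq]].
    destruct (HJ1 X n (tr cell (eq_sym (heq_src Hns)) (eq_sym (heq_tgt Hns)) t))
      as [m [[Hmn Hm] Hm_uniq]].
    exists m; split; [split |].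
    + eapply heq_trans; [exact (heq_sym (heq_lwh_lwh m j a)) |].
      exact (heq_trans (heq_lwh_eq a Hmn) Hns).
    + exact (heq_trans (tr_eq_heq Hm) (heq_sym (tr_heq _ _ t))).
    + intros q [Hqs Hqt].
      assert (Hqn : n = comp q j) by exact (Hn_uniq _ (heq_trans (heq_lwh_lwh q j a) Hqs)).
      apply Hm_uniq; exists (eq_sym Hqn); apply heq_tr.
      exact (heq_trans Hqt (tr_heq _ _ t)).
  - intros X m m' r p Ha Hb.
    pose (r' := tr cell (eq_sym (comp_assoc m j u)) (eq_sym (comp_assoc m' j u)) r).
    pose (p' := tr cell (eq_sym (comp_assoc m j v)) (eq_sym (comp_assoc m' j v)) p).
    apply (ex_unique_rwh_comp j u v r p r' p'
             (heq_sym (tr_heq _ _ r)) (heq_sym (tr_heq _ _ p))).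
    + apply HO2.
      exact (heq_vcomp_square (heq_sym (heq_lwh_lwh m j a)) (tr_heq _ _ p) (tr_heq _ _ r)
               (heq_sym (heq_lwh_lwh m' j a)) Ha).
    + intros th1 Hr1 Hp1; apply HJ2.
      refine (heq_vcomp_square (heq_sym (heq_lwhA m j b)) _ _ (heq_sym (heq_lwhA m' j b)) Hb).
      * rewrite Hp1; apply tr_heq.
      * rewrite Hr1; apply tr_heq.
Qed.

Lemma bof_kernel_of_equifier {O A B E : ob C} {u v : hom O A} {a b : cell u v}
  {f : hom A B} {e : hom E O} :
  is_parallel_arrows_object u v a b -> is_equifier C (rwh a f) (rwh b f) e ->
  is_bof_kernel C f (comp e u) (comp e v) (lwh e a) (lwh e b).
Proof.
  intros [HO1 HO2] [He0 [He1 He2]]; split; [| split].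
  - apply heq_eq; eapply heq_trans; [apply heq_lwh_rwh |].
    rewrite He0; exact (heq_sym (heq_lwh_rwh e b f)).
  - intros X x y s t Hst.
    destruct (HO1 X x y s t) as [n [[Hns Hnt] Hn_uniq]].
    assert (Hnf : lwh n (rwh a f) = lwh n (rwh b f)).
    { apply heq_eq; eapply heq_trans; [exact (heq_sym (heq_lwh_rwh n a f)) |].
      eapply heq_trans; [exact (heq_rwh Hns) |]; rewrite Hst.
      exact (heq_trans (heq_rwh (heq_sym Hnt)) (heq_lwh_rwh n b f)). }
    destruct (He1 X n Hnf) as [m [Hmn Hm_uniq]].
    exists m; split.
    + apply heq_tr2; (eapply heq_trans; [exact (heq_sym (heq_lwh_lwh m e _)) |]);
        (eapply heq_trans; [exact (heq_lwh_eq _ Hmn) | assumption]).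
    + intros q [H1 [H2 [Hqs Hqt]]]; apply Hm_uniq; symmetry; apply Hn_uniq.
      split; (eapply heq_trans; [apply heq_lwh_lwh |]); eapply tr_eq_heq; eassumption.
  - intros X m m' r p Ha Hb.
    pose (r' := tr cell (eq_sym (comp_assoc m e u)) (eq_sym (comp_assoc m' e u)) r).
    pose (p' := tr cell (eq_sym (comp_assoc m e v)) (eq_sym (comp_assoc m' e v)) p).
    apply (ex_unique_rwh_comp e u v r p r' p'
             (heq_sym (tr_heq _ _ r)) (heq_sym (tr_heq _ _ p))).
    + apply HO2.
      * exact (heq_vcomp_square (heq_sym (heq_lwh_lwh m e a)) (tr_heq _ _ p) (tr_heq _ _ r)
                 (heq_sym (heq_lwh_lwh m' e a)) Ha).
      * exact (heq_vcomp_square (heq_sym (heq_lwh_lwh m e b)) (tr_heq _ _ p) (tr_heq _ _ r)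
                 (heq_sym (heq_lwh_lwh m' e b)) Hb).
    + intros th1 _ _; apply He2.
Qed.

Lemma bof_kernel_exists :
  finitely_complete C -> forall (A B : ob C) (f : hom A B),
  exists (E : ob C) (u v : hom E A) (a b : cell u v), is_bof_kernel C f u v a b.
Proof.
  intros [_ [Hprod [_ [Hins Heqf]]]] A B f.
  destruct (Hprod A A) as [P [p1 [p2 HP]]].
  destruct (Hins P A p1 p2) as [I [i [l HI]]].
  destruct (Hins I A (comp i p1) (comp i p2)) as [J [j [l2 HJ]]].
  destruct (Heqf J B _ _ (rwh (lwh j l) f) (rwh l2 f)) as [E [e HE]].
  pose proof (parallel_arrows_object_of_inserter (arrow_object_of_inserter HP HI) HJ) as HJ'.
  exact (ex_intro _ E (ex_intro _ _ (ex_intro _ _ (ex_intro _ _ (ex_intro _ _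
           (bof_kernel_of_equifier HJ' HE)))))).
Qed.

End Kernels.

Section Quotients.
Context {C : TwoCat}.

Lemma bof_kernel_coequified {A B E Y : ob C} {f : hom A B} {u v : hom E A} {a b : cell u v}
  {g : hom A Y} :
  is_bof_kernel C f u v a b -> rwh a g = rwh b g ->
  forall (X : ob C) (x y : hom X A) (s t : cell x y), rwh s f = rwh t f -> rwh s g = rwh t g.
Proof.
  intros [_ [Hk1 _]] Hg X x y s t Hst.
  destruct (Hk1 X x y s t Hst) as [m [[H1 [H2 [Hs Ht]]] _]].
  apply heq_eq; eapply heq_trans; [exact (heq_rwh (heq_sym (tr_eq_heq Hs))) |].
  eapply heq_trans; [apply heq_lwh_rwh |]; rewrite Hg.
  exact (heq_trans (heq_sym (heq_lwh_rwh m b g)) (heq_rwh (tr_eq_heq Ht))).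
Qed.

Lemma bof_quotient_of_kernel {X A B E : ob C} {x y : hom X A} {s t : cell x y}
  {f : hom A B} {u v : hom E A} {a b : cell u v} :
  is_bof_quotient C s t f -> is_bof_kernel C f u v a b -> is_bof_quotient C a b f.
Proof.
  intros [Hf0 [Hf1 Hf2]] Hk; split; [exact (proj1 Hk) | split; [| exact Hf2]].
  intros Y g Hg; apply Hf1; exact (bof_kernel_coequified Hk Hg X x y s t Hf0).
Qed.

Lemma factor_along_iso {X1 X2 Q A B : ob C} {u v : hom X2 X1} {a b : cell u v}
  {e : hom X1 Q} {f : hom A B} {h : hom X1 A} {k : hom Q B} {h' : hom A X1} {k' : hom B Q} :
  comp h' h = idm A -> comp k k' = idm Q -> comp k' k = idm B -> comp e k = comp h f ->
  (forall (Y : ob C) (g : hom X1 Y), rwh a g = rwh b g -> exists! m : hom Q Y, comp e m = g) ->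
  forall (Y : ob C) (g : hom A Y), rwh (rwh a h) g = rwh (rwh b h) g ->
    exists! m : hom B Y, comp f m = g.
Proof.
  intros Hh'h Hkk' Hk'k Hek He1 Y g Hg.
  assert (Hhg : rwh a (comp h g) = rwh b (comp h g)).
  { apply heq_eq; eapply heq_trans; [exact (heq_sym (heq_rwh_rwh a h g)) |].
    rewrite Hg; apply heq_rwh_rwh. }
  destruct (He1 Y (comp h g) Hhg) as [m0 [Hm0 Hm0_uniq]].
  exists (comp k' m0); split.
  - assert (Hfk' : comp f k' = comp h' e).
    { transitivity (comp (comp (comp h' h) f) k'); [rewrite Hh'h, comp_id_l; reflexivity |].
      rewrite (comp_assoc h' h f), <- Hek, !comp_assoc, Hkk', comp_id_r; reflexivity. }
    rewrite <- comp_assoc, Hfk', comp_assoc, Hm0, <- comp_assoc, Hh'h, comp_id_l.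
    reflexivity.
  - intros m1 Hm1.
    assert (Hm01 : m0 = comp k m1).
    { apply Hm0_uniq; rewrite <- comp_assoc, Hek, comp_assoc, Hm1; reflexivity. }
    rewrite Hm01, <- comp_assoc, Hk'k, comp_id_l; reflexivity.
Qed.

Lemma lwh_unique_along_iso {X1 Q A B : ob C} {e : hom X1 Q} {f : hom A B}
  {h : hom X1 A} {k : hom Q B} {h' : hom A X1} {k' : hom B Q} :
  comp h' h = idm A -> comp k k' = idm Q -> comp k' k = idm B -> comp e k = comp h f ->
  (forall (Y : ob C) (m m' : hom Q Y) (r : cell (comp e m) (comp e m')),
      exists! th : cell m m', lwh e th = r) ->
  forall (Y : ob C) (m m' : hom B Y) (r : cell (comp f m) (comp f m')),
    exists! th : cell m m', lwh f th = r.
Proof.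
  intros Hh'h Hkk' Hk'k Hek He2 Y m m' r.
  assert (Ehf : forall z : hom B Y, comp h (comp f z) = comp e (comp k z))
    by (intro z; rewrite <- !comp_assoc, Hek; reflexivity).
  assert (Hsquare : forall th : cell m m', lwh h (lwh f th) =~= lwh e (lwh k th)).
  { intro th; eapply heq_trans; [exact (heq_sym (heq_lwh_lwh h f th)) |].
    exact (heq_trans (heq_lwh_eq th (eq_sym Hek)) (heq_lwh_lwh e k th)). }
  destruct (He2 Y (comp k m) (comp k m') (tr cell (Ehf m) (Ehf m') (lwh h r)))
    as [th0 [Hth0 Hth0_uniq]].
  assert (Ek : forall z : hom B Y, comp k' (comp k z) = z)
    by (intro z; rewrite <- comp_assoc, Hk'k, comp_id_l; reflexivity).
  pose (th := tr cell (Ek m) (Ek m') (lwh k' th0)).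
  assert (Hkth : lwh k th = th0).
  { apply heq_eq; eapply heq_trans; [exact (heq_lwh (heq_sym (tr_heq _ _ _))) |].
    eapply heq_trans; [exact (heq_sym (heq_lwh_lwh k k' th0)) |].
    exact (heq_trans (heq_lwh_eq th0 Hkk') (heq_lwh_idm th0)). }
  exists th; split.
  - apply heq_eq, (heq_lwh_cancel Hh'h).
    eapply heq_trans; [apply Hsquare |]; rewrite Hkth, Hth0.
    exact (heq_sym (tr_heq _ _ _)).
  - intros th' Hth'; apply heq_eq, (heq_lwh_cancel Hk'k).
    replace th0 with (lwh k th') in Hkth; [rewrite Hkth; apply heq_refl |].
    symmetry; apply Hth0_uniq; symmetry; apply heq_tr.
    rewrite <- Hth'; exact (Hsquare th').
Qed.

Lemma bof_quotient_along_iso {X1 X2 Q A B : ob C} {u v : hom X2 X1} {a b : cell u v}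
  {e : hom X1 Q} {f : hom A B} {h : hom X1 A} {k : hom Q B} :
  is_bof_quotient C a b e -> is_iso C h -> is_iso C k -> comp e k = comp h f ->
  is_bof_quotient C (rwh a h) (rwh b h) f.
Proof.
  intros [He0 [He1 He2]] [h' [_ Hh'h]] [k' [Hkk' Hk'k]] Hek; split; [| split].
  - apply heq_eq; eapply heq_trans; [apply heq_rwh_rwh |].
    eapply heq_trans; [exact (heq_rwh_eq a (eq_sym Hek)) |].
    eapply heq_trans; [exact (heq_sym (heq_rwh_rwh a e k)) |]; rewrite He0.
    eapply heq_trans; [apply heq_rwh_rwh |].
    eapply heq_trans; [exact (heq_rwh_eq b Hek) | exact (heq_sym (heq_rwh_rwh b h f))].
  - exact (factor_along_iso Hh'h Hkk' Hk'k Hek He1).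
  - exact (lwh_unique_along_iso Hh'h Hkk' Hk'k Hek He2).
Qed.

End Quotients.

Theorem proposition5p12 (C : TwoCat) (HC : finitely_complete C)
  (A B : ob C) (f : hom A B) :
  bof_quotient_map C f -> effective_bof_quotient_map C f.
Proof.
  intro Hf; split; [exact Hf | split; [exact (bof_kernel_exists HC A B f) |]].
  intros E u v a b Hker.
  destruct Hf as [X1 [X2 [Q [u0 [v0 [a0 [b0 [e [He [h [k [Hh [Hk Hek]]]]]]]]]]]]].
  exists B, f; split.
  - exact (bof_quotient_of_kernel (bof_quotient_along_iso He Hh Hk Hek) Hker).
  - exists (idm B); split; [apply comp_id_r |].
    exists (idm B); split; apply comp_id_l.
Qed.
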